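(* Consider the dynamic load balancing game described in the context, and suppose all players follow the best-response algorithm. Then after $$t''=O\!\left(\max_j\left\lceil\frac{s_j^0}{\mu_j}\right\rceil\cdot\frac{\sum_j\mu_j+\sum_j s_j^0}{\sum_j\mu_j-\lambda_{\max}}\right)$$ iterations, the state of each server becomes zero (the system becomes load-balanced), and it remains zero thereafter. In particular, the strategies of the players converge to the pure Nash equilibrium of the static load balancing game with zero initial loads, i.e., $\lim_{t\to\infty}a_{ij}^t=\frac{\mu_j}{\sum_{k=1}^m\mu_k}$ for every player $i$ and server $j$.
   Context: Dynamic load balancing game: there are $m$ servers with service rates $\mu_j>0$ and $n$ players with job lengths $\lambda_i>0$; let $\lambda_{\max}=\max_i\lambda_i$, and assume $\lambda_{\max}<\sum_{j=1}^m\mu_j$. Time is discrete, $t=0,1,2,\dots$; the state at time $t$ is $s^t=(s_1^t,\dots,s_m^t)$, $s_j^t\ge0$ the load on server $j$, with given initial state $s^0$. At each time $t$ exactly one player $i$ receives a new job of length $\lambda_i$ and immediately chooses $a_i^t$ in the simplex $\{a:\sum_ja_j=1,a_j\ge0\}$, incurring cost $$D_i(a^t,s^t)=\sum_{j=1}^m\lambda_i a_{ij}^t\left(\frac{\lambda_i a_{ij}^t}{2\mu_j}+\frac{s_j^t}{\mu_j}\right),$$ after which $s_j^{t+1}=\max\{0,\ s_j^t+\lambda_i a_{ij}^t-\mu_j\}$ for all $j$. Best-response algorithm: the player receiving the job at time $t$ chooses $a_i^t$ as the unique minimizer of $D_i(a_i,s^t)$ over the simplex. The static load balancing game with zero initial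 loads is the game in which each player $i$ chooses $a_i$ in the simplex to minimize $\sum_j\lambda_ia_{ij}\big(\frac{\lambda_ia_{ij}}{2\mu_j}+\frac{\sum_{k\ne i}\lambda_ka_{kj}}{\mu_j}\big)$. *)

(* R : realType, servers 'I_m, players 'I_n. *)
From HB Require Import structures.
From mathcomp Require Import all_boot all_order all_algebra.
From mathcomp Require Import all_classical all_reals all_analysis.
Set Implicit Arguments. Unset Strict Implicit. Unset Printing Implicit Defensive.
Import Order.TTheory GRing.Theory Num.Theory.
Import numFieldNormedType.Exports.
Local Open Scope ring_scope.

Section LB.
Variables (R : realType) (m : nat).

Definition in_simplex (a : 'I_m -> R) : Prop :=
  (forall j, 0 <= a j) /\ \sum_(j < m) a j = 1.

(* cost D_i(a,s) of a player with job length lam, rates mu, state s *)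
Definition cost (mu : 'I_m -> R) (lam : R) (a s : 'I_m -> R) : R :=
  \sum_(j < m) lam * a j * (lam * a j / (2 * mu j) + s j / mu j).

Definition best_response (mu : 'I_m -> R) (lam : R) (s a : 'I_m -> R) : Prop :=
  in_simplex a /\ forall b, in_simplex b -> cost mu lam a s <= cost mu lam b s.

Definition next_state (mu : 'I_m -> R) (lam : R) (a s : 'I_m -> R) : 'I_m -> R :=
  fun j => Num.max 0 (s j + lam * a j - mu j).

Definition static_cost (n : nat) (mu : 'I_m -> R) (lam : 'I_n -> R)
  (A : 'I_n -> 'I_m -> R) (i : 'I_n) (ai : 'I_m -> R) : R :=
  \sum_(j < m) lam i * ai j *
     (lam i * ai j / (2 * mu j) + (\sum_(k < n | k != i) lam k * A k j) / mu j).

Definition is_pure_NE (n : nat) (mu : 'I_m -> R) (lam : 'I_n -> R)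
  (A : 'I_n -> 'I_m -> R) : Prop :=
  (forall i, in_simplex (A i)) /\
  forall i b, in_simplex b -> static_cost mu lam A i (A i) <= static_cost mu lam A i b.

End LB.

From HB Require Import structures.
From mathcomp Require Import all_boot all_order all_algebra.
From mathcomp Require Import all_classical all_reals all_analysis.
From mathcomp Require Import ring lra.
Import Order.TTheory GRing.Theory Num.Theory.
Import numFieldNormedType.Exports.
Local Open Scope classical_set_scope.
Local Open Scope ring_scope.

(* A best response water-fills: moving mass from a used server j to any server
   k cannot lower the cost, so every used server ends at the same normalised
   level (s_j + lam a_j) / mu_j, and that level is at most the average
   (sum_k s_k + lam) / sum_k mu_k.  Hence if s_j <= H mu_j for all j, then
   after one step s_j <= max(0, H + lam / sum mu - 1) mu_j, and as
   lam <= lam_max the bound H decreases by 1 - lam_max / sum mu per step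
   until the state vanishes.  At a state proportional to mu the cost of b
   exceeds that of mu / sum mu by a positive definite quadratic form in
   b - mu / sum mu, so mu / sum mu is then the unique best response; in the
   static game every player faces such a state. *)

Section RealArith.
Context {R : realFieldType}.

Lemma linear_coef_ge0 (A B e0 : R) : 0 < e0 -> 0 <= B ->
  (forall e, 0 < e -> e <= e0 -> 0 <= A * e + B * e ^+ 2) -> 0 <= A.
Proof.
move=> he0 hB H; rewrite leNgt; apply/negP => hA.
pose e := Num.min e0 (- A / (B + 1)).
have he : 0 < e by rewrite lt_min he0 /= divr_gt0 // ?oppr_gt0 //; lra.
have hee0 : e <= e0 by rewrite ge_min lexx.
have hBe : B * e < - A.
  have : (B + 1) * e <= - A by rewrite mulrC -ler_pdivlMr ?ge_min ?lexx ?orbT //; lra.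
  nra.
have := H e he hee0; nra.
Qed.

Lemma maxr0_decay (u c d : R) : 0 <= d -> c <= - d ->
  Num.max 0 (Num.max 0 u + c) <= Num.max 0 (u - d).
Proof.
move=> hd hc; rewrite ge_max le_max lexx /=.
by have [hu|hu] := leP 0 u; rewrite le_max; apply/orP; [right|left]; lra.
Qed.

Lemma drain_time_le (K S L M t : R) : 0 <= K -> 0 <= S -> 0 <= L -> L < M ->
  K * ((M + S) / (M - L)) <= t -> K <= t * (1 - L / M).
Proof.
move=> hK hS hL hLM ht.
have hM : 0 < M by lra.
have hML : 0 < M - L by lra.
have hKM : K * M <= t * (M - L).
  rewrite -(ler_pM2r hML) mulrA mulfVK ?gt_eqF // in ht; nra.
by rewrite -(ler_pM2r hM) -mulrA mulrBl mul1r mulfVK ?gt_eqF.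
Qed.

End RealArith.

Lemma sumr_delta (R : pzSemiRingType) (m : nat) (k : 'I_m) (f : 'I_m -> R) :
  \sum_(l < m) (l == k)%:R * f l = f k.
Proof.
rewrite (bigD1 k) //= eqxx mul1r big1 ?addr0 // => l /negPf ->; exact: mul0r.
Qed.

Section LoadBalancing.
Context {R : realType} {m : nat} {mu : 'I_m -> R}.
Hypothesis hmu : forall j, 0 < mu j.

(* The marginal cost of server j, divided by lam. *)
Definition level (lam : R) (s a : 'I_m -> R) (j : 'I_m) : R :=
  (s j + lam * a j) / mu j.

Definition prop_share (j : 'I_m) : R := mu j / \sum_(k < m) mu k.

Lemma sqr_term_ge0 (x y : R) l : 0 <= x ^+ 2 * y ^+ 2 / (2 * mu l).
Proof. by apply: divr_ge0; apply: mulr_ge0; rewrite ?sqr_ge0 ?(ltW (hmu l)). Qed.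

Lemma cost_perturb lam (s a d : 'I_m -> R) (e : R) :
  cost mu lam (fun l => a l + e * d l) s =
  cost mu lam a s + e * (lam * \sum_(l < m) d l * level lam s a l)
    + e ^+ 2 * \sum_(l < m) lam ^+ 2 * d l ^+ 2 / (2 * mu l).
Proof.
rewrite /cost /level !mulr_sumr -!big_split /=; apply: eq_bigr => l _.
by field; rewrite gt_eqF.
Qed.

Lemma best_response_level_le lam s a j k : 0 < lam -> best_response mu lam s a ->
  0 < a j -> level lam s a j <= level lam s a k.
Proof.
move=> hlam [[ha0 ha1] hopt] haj.
have [->|njk] := eqVneq j k; first exact: lexx.
pose d l : R := (l == k)%:R - (l == j)%:R.
have hd : \sum_(l < m) d l = 0.
  under eq_bigr do rewrite -[d _]mulr1.
  by rewrite /d; under eq_bigr do rewrite mulrBl; rewrite sumrB !sumr_delta subrr.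
have hb e : 0 < e -> e <= a j -> in_simplex (fun l => a l + e * d l).
  move=> he hea; split=> [l|]; last by rewrite big_split /= -mulr_sumr hd mulr0 addr0.
  rewrite /d; have [->|nlk] := eqVneq l k.
    by rewrite (eq_sym k j) (negPf njk) subr0 mulr1 addr_ge0 // ltW.
  have [->|nlj] := eqVneq l j; first by rewrite sub0r mulrN1 subr_ge0.
  by rewrite subrr mulr0 addr0.
have hQ : 0 <= \sum_(l < m) lam ^+ 2 * d l ^+ 2 / (2 * mu l).
  by apply: sumr_ge0 => l _; exact: sqr_term_ge0.
suff : 0 <= lam * (level lam s a k - level lam s a j) by rewrite pmulr_rge0 // subr_ge0.
apply: (linear_coef_ge0 _ _ _ haj hQ) => e he hea.
have := hopt _ (hb e he hea); rewrite cost_perturb -addrA lerDl.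
have -> : \sum_(l < m) d l * level lam s a l = level lam s a k - level lam s a j.
  by rewrite /d; under eq_bigr do rewrite mulrBl; rewrite sumrB !sumr_delta.
by rewrite mulrC [_ ^+ 2 * _]mulrC.
Qed.

Hypothesis hM : 0 < \sum_(k < m) mu k.

Lemma best_response_level_bound lam s a H j : 0 < lam -> best_response mu lam s a ->
  (forall k, s k <= H * mu k) -> level lam s a j <= H + lam / \sum_(k < m) mu k.
Proof.
move=> hlam hbr hsH; have [[ha0 ha1] _] := hbr.
have hmj := hmu j.
have [haj|haj] := ltrP 0 (a j); last first.
  have aj0 : a j = 0 by apply/eqP; rewrite eq_le haj ha0.
  apply: (@le_trans _ _ H); first by rewrite /level aj0 mulr0 addr0 ler_pdivrMr.
  by rewrite lerDl divr_ge0 ?ltW.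
have hlev k : level lam s a j * mu k <= s k + lam * a k.
  by rewrite -ler_pdivlMr //; exact: best_response_level_le.
rewrite -(ler_pM2r hM) mulrDl mulfVK ?gt_eqF // mulr_sumr.
apply: le_trans (ler_sum _ (fun k _ => hlev k)) _.
by rewrite big_split /= -mulr_sumr ha1 mulr1 lerD2r mulr_sumr; exact: ler_sum.
Qed.

Lemma next_state_le lam s a H j : 0 < lam -> best_response mu lam s a ->
  (forall k, s k <= H * mu k) ->
  next_state mu lam a s j <= Num.max 0 (H + lam / (\sum_(k < m) mu k) - 1) * mu j.
Proof.
move=> hlam hbr hsH; have hmj := hmu j.
rewrite /next_state ge_max mulr_ge0 ?le_max ?lexx ?(ltW hmj) //=.
apply: (@le_trans _ _ ((H + lam / (\sum_(k < m) mu k) - 1) * mu j)).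
  by have := best_response_level_bound _ _ _ _ j hlam hbr hsH; rewrite /level ler_pdivrMr //; lra.
by apply: ler_wpM2r; [exact: ltW | rewrite le_max lexx orbT].
Qed.

Lemma in_simplex_prop_share : in_simplex prop_share.
Proof.
split=> [j|]; first by rewrite divr_ge0 ?ltW.
by rewrite -mulr_suml divff ?gt_eqF.
Qed.

Lemma cost_prop_share_gap lam c (b : 'I_m -> R) : \sum_(j < m) b j = 1 ->
  cost mu lam b (fun j => c * mu j) =
  cost mu lam prop_share (fun j => c * mu j)
    + \sum_(j < m) lam ^+ 2 * (b j - prop_share j) ^+ 2 / (2 * mu j).
Proof.
move=> hb1.
have -> : cost mu lam b (fun j => c * mu j) =
    cost mu lam (fun l => prop_share l + 1 * (b l - prop_share l)) (fun j => c * mu j).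
  by congr cost; apply/funext => l; rewrite mul1r addrC subrK.
have hlev j : level lam (fun j => c * mu j) prop_share j = c + lam / \sum_(k < m) mu k.
  by rewrite /level /prop_share; field; rewrite !gt_eqF.
have [_ hp1] := in_simplex_prop_share.
rewrite cost_perturb expr1n !mul1r.
under eq_bigr do rewrite hlev.
by rewrite -mulr_suml sumrB hb1 hp1 subrr mul0r mulr0 addr0.
Qed.

Lemma best_response_prop_share lam c : best_response mu lam (fun j => c * mu j) prop_share.
Proof.
split=> [|b [_ hb1]]; first exact: in_simplex_prop_share.
rewrite (cost_prop_share_gap _ _ _ hb1) lerDl.
by apply: sumr_ge0 => j _; exact: sqr_term_ge0.
Qed.

Lemma best_response_prop_share_uniq lam c s a : 0 < lam ->
  (forall j, s j = c * mu j) -> best_response mu lam s a -> forall j, a j = prop_share j.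
Proof.
move=> hlam hs [[_ ha1] hopt] j.
have hcost x : cost mu lam x s = cost mu lam x (fun j => c * mu j).
  by apply: eq_bigr => l _; rewrite hs.
have := hopt _ in_simplex_prop_share.
rewrite !hcost (cost_prop_share_gap _ _ _ ha1) gerDl => hle.
have hterm l : 0 <= lam ^+ 2 * (a l - prop_share l) ^+ 2 / (2 * mu l) := sqr_term_ge0 _ _ l.
have /(psumr_eq0P (fun l _ => hterm l))/(_ j isT) :
    \sum_(l < m) lam ^+ 2 * (a l - prop_share l) ^+ 2 / (2 * mu l) = 0.
  by apply/eqP; rewrite eq_le hle /=; exact: sumr_ge0.
move/eqP; rewrite !mulf_eq0 invr_eq0 mulf_eq0 pnatr_eq0 (gt_eqF hlam) (gt_eqF (hmu j)) /= !orbF orbb.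
by rewrite subr_eq0 => /eqP.
Qed.

Lemma static_cost_prop_share n (lam : 'I_n -> R) i b :
  static_cost mu lam (fun=> prop_share) i b =
  cost mu (lam i) b (fun j => (\sum_(k < n | k != i) lam k) / (\sum_(k < m) mu k) * mu j).
Proof.
apply: eq_bigr => j _; rewrite /prop_share -mulr_suml mulrA.
by rewrite [_ * mu j / _]mulrAC.
Qed.

Lemma prop_share_is_pure_NE n (lam : 'I_n -> R) : is_pure_NE mu lam (fun=> prop_share).
Proof.
split=> [i|i b hb]; first exact: in_simplex_prop_share.
by rewrite !static_cost_prop_share; apply: (best_response_prop_share _ _).2.
Qed.

Lemma best_response_cvg_prop_share (lf : nat -> R) (s b : nat -> 'I_m -> R) :
  (forall t, 0 < lf t) -> (\forall t \near \oo, forall j, s t j = 0) ->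
  (forall t, best_response mu (lf t) (s t) (b t)) ->
  forall j, (fun t => b t j) @ \oo --> prop_share j.
Proof.
move=> hlf hs hb j; apply: cvg_near_cst; apply: filterS hs => t hst.
by apply: (best_response_prop_share_uniq _ 0 _ _ (hlf t) _ (hb t)) => k; rewrite mul0r.
Qed.

Section Dynamics.
Context {n : nat} {lam : 'I_n -> R} {p : nat -> 'I_n} {a s : nat -> 'I_m -> R}.
Hypothesis hlam : forall i, 0 < lam i.
Hypothesis hLM : \big[Num.max/0]_(i < n) lam i < \sum_(k < m) mu k.
Hypothesis hs0 : forall j, 0 <= s 0%N j.
Hypothesis hbr : forall t, best_response mu (lam (p t)) (s t) (a t).
Hypothesis hstep : forall t, s t.+1 = next_state mu (lam (p t)) (a t) (s t).

Local Notation drain := (1 - (\big[Num.max/0]_(i < n) lam i) / (\sum_(k < m) mu k)).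

Lemma state_ge0 t j : 0 <= s t j.
Proof. by case: t => [|t]; rewrite ?hstep ?le_max ?lexx. Qed.

Lemma drain_ge0 : 0 <= drain.
Proof. by rewrite subr_ge0 ler_pdivrMr // mul1r ltW. Qed.

Lemma state_le K t j : (forall j, s 0%N j <= K * mu j) ->
  s t j <= Num.max 0 (K - t%:R * drain) * mu j.
Proof.
move=> hK; elim: t j => [|t IH] j.
  rewrite mul0r subr0; apply: le_trans (hK j) _.
  by apply: ler_wpM2r; [exact: ltW | rewrite le_max lexx orbT].
rewrite hstep; apply: le_trans (next_state_le _ _ _ _ j (hlam _) (hbr t) IH) _.
rewrite ler_pM2r //.
have hshare : lam (p t) / (\sum_(k < m) mu k) - 1 <= - drain.
  rewrite opprB lerD2r; apply: ler_wpM2r; first by rewrite invr_ge0 ltW.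
  exact: le_bigmax.
rewrite -addn1 natrD mulrDl mul1r opprD addrA -[_ + _ - 1]addrA.
exact: maxr0_decay _ _ _ drain_ge0 hshare.
Qed.

Lemma state_eq0 K t : (forall j, s 0%N j <= K * mu j) -> K <= t%:R * drain ->
  forall j, s t j = 0.
Proof.
move=> hK hKt j; apply/eqP; rewrite eq_le state_ge0 andbT.
apply: le_trans (state_le _ t j hK) _.
by rewrite mulr_le0_ge0 ?(ltW (hmu j)) // ge_max lexx subr_le0.
Qed.

End Dynamics.
End LoadBalancing.

Theorem theorem4 (R : realType) :
  exists C : R, 0 < C /\
  forall (m n : nat) (mu : 'I_m -> R) (lam : 'I_n -> R) (s0 : 'I_m -> R)
    (p : nat -> 'I_n) (a s : nat -> 'I_m -> R),
    (forall j, 0 < mu j) ->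
    (forall i, 0 < lam i) ->
    (forall j, 0 <= s0 j) ->
    \big[Num.max/0]_(i < n) lam i < \sum_(j < m) mu j ->
    s 0%N = s0 ->
    (forall t, best_response mu (lam (p t)) (s t) (a t)) ->
    (forall t, s t.+1 = next_state mu (lam (p t)) (a t) (s t)) ->
    (* finite-time load balancing, with the O(...) bound *)
    (forall t : nat,
       C * ((\big[Num.max/0]_(j < m) (Num.ceil (s0 j / mu j))%:~R) *
            ((\sum_(j < m) mu j + \sum_(j < m) s0 j) /
             (\sum_(j < m) mu j - \big[Num.max/0]_(i < n) lam i)))
       <= t%:R ->
       forall j, s t j = 0) /\
    (* the limit profile is a pure NE of the static game with zero loads *)
    is_pure_NE mu lam (fun _ j => mu j / \sum_(k < m) mu k) /\
    (* the strategies played converge to it *)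
    (forall j, (fun t => a t j) @ \oo --> mu j / \sum_(k < m) mu k) /\
    (forall (i : 'I_n) (b : nat -> 'I_m -> R),
       (forall t, best_response mu (lam i) (s t) (b t)) ->
       forall j, (fun t => b t j) @ \oo --> mu j / \sum_(k < m) mu k).
Proof.
exists 1; split=> [|m n mu lam s0 p a s hmu hlam hs0 hLM s00 hbr hstep]; first exact: ltr01.
set M := \sum_(j < m) mu j in hLM *.
set L := \big[Num.max/0]_(i < n) lam i in hLM *.
set K := \big[Num.max/0]_(j < m) _.
have hL : 0 <= L by exact: bigmax_ge_id.
have hM : 0 < M by exact: le_lt_trans hL hLM.
have hs0t j : 0 <= s 0%N j by rewrite s00.
have hK j : s 0%N j <= K * mu j.
  rewrite s00 -ler_pdivrMr //; apply: le_trans (ceil_ge _) _.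
  exact: (le_bigmax _ (fun j => (Num.ceil (s0 j / mu j))%:~R) j).
set T := 1 * (K * _).
have balanced (t : nat) : T <= t%:R -> forall j, s t j = 0.
  rewrite /T mul1r => ht; apply: (state_eq0 hmu hM hlam hLM hs0t hbr hstep _ _ hK).
  apply: drain_time_le ht => //; first exact: bigmax_ge_id.
  by apply: sumr_ge0 => j _; exact: hs0.
have near_balanced : \forall t \near \oo, forall j, s t j = 0.
  exact: filterS balanced (nbhs_infty_ger T).
split=> //; split; first exact: (prop_share_is_pure_NE hmu hM).
split=> [|i b hb].
  exact: (best_response_cvg_prop_share hmu hM _ _ _ (fun t => hlam (p t)) near_balanced).
exact: (best_response_cvg_prop_share hmu hM _ _ _ (fun=> hlam i) near_balanced).
Qed.
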